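(* Let $A$ and $B$ be tournaments and $T=A+B$. If $F$ is a finite subset of $T$ (viewed as a sub-tournament) with $F\cap A\ne\emptyset$ and $z\in B\setminus F$, then $\mathsf{rk}_T(F\cup\{z\})=0$.
   Context: A tournament is a structure $(T,\to)$ such that for any two distinct $u,v$ exactly one of $u\to v$, $v\to u$ holds. For tournaments $A,B$, $A+B$ is the tournament on the disjoint union $A\sqcup B$ keeping the orientations inside $A$ and inside $B$, with $a\to b$ for all $a\in A$, $b\in B$. Let $\mathcal F$ be the class of finite tournaments; substructures are induced sub-tournaments and $\mathsf{age}(X)$ is the set of finite sub-tournaments of $X$. For $A'\le B'$, $B'$ is a prime extension of $A'$ if $|B'\setminus A'|=1$; a realization of $B'$ in $X$ (where $A'\le X$) is $C\le X$ with $A'\le C$ and an isomorphism $B'\to C$ fixing $A'$ pointwise. For $F\in\mathsf{age}(X)$ define by recursion: $\mathsf{rk}_X(F)\ge0$ always; $\mathsf{rk}_X(F)\ge\alpha+1$ iff every prime extension $B'\in\mathcal F$ of $F$ has a realization $C$ in $X$ with $\mathsf{rk}_X(C)\ge\alpha$; for limit $\alpha$, $\mathsf{rk}_X(F)\ge\alpha$ iff $\mathsf{rk}_X(F)\ge\beta$ for all $\beta<\alpha$. $\mathsf{rk}_X(F)=\sup\{\alpha:\mathsf{rk}_X(F)\ge\alpha\}$ (or $\infty$). *)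

From Stdlib Require Import List.
Set Implicit Arguments.

(** A tournament: for distinct u v exactly one of u -> v, v -> u;
    no loops (asymmetry applied to u = v). *)
Record tournament := Tournament {
  carrier :> Type;
  arr : carrier -> carrier -> Prop;
  arr_asym : forall x y, arr x y -> ~ arr y x;
  arr_tot : forall x y, x <> y -> arr x y \/ arr y x
}.
Arguments arr {t} _ _.

Definition sum_arr (A B : tournament) (u v : A + B) : Prop :=
  match u, v with
  | inl a, inl a' => arr a a'
  | inr b, inr b' => arr b b'
  | inl _, inr _ => True
  | inr _, inl _ => False
  end.

Lemma sum_arr_asym (A B : tournament) (x y : A + B) :
  @sum_arr A B x y -> ~ @sum_arr A B y x.
Proof.
  destruct x, y; simpl; auto; apply arr_asym.
Qed.

Lemma sum_arr_tot (A B : tournament) (x y : A + B) :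
  x <> y -> @sum_arr A B x y \/ @sum_arr A B y x.
Proof.
  destruct x as [a|b], y as [a'|b']; simpl; auto.
  - intro H; apply arr_tot; congruence.
  - intro H; apply arr_tot; congruence.
Qed.

Definition tsum (A B : tournament) : tournament :=
  @Tournament (A + B)%type (@sum_arr A B) (@sum_arr_asym A B) (@sum_arr_tot A B).

Definition finite_set {X : Type} (F : X -> Prop) : Prop :=
  exists l : list X, forall x, F x -> In x l.

Definition finite_type (Y : Type) : Prop :=
  exists l : list Y, forall y, In y l.

(** B' (a finite tournament Y together with the substructure embedding
    e of the sub-tournament F of X) is a prime extension of F:
    F <= B' via e, and |B' \ F| = 1. *)
Definition prime_ext {X : tournament} (F : X -> Prop) (Y : tournament)
    (e : {x : X | F x} -> Y) : Prop :=
  finite_type Y /\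
  (forall a b, e a = e b -> a = b) /\
  (forall a b, arr (e a) (e b) <-> arr (proj1_sig a) (proj1_sig b)) /\
  (exists y0 : Y, (forall a, e a <> y0) /\
     forall y : Y, y <> y0 -> exists a, e a = y).

Definition realization {X : tournament} (F : X -> Prop) (Y : tournament)
    (e : {x : X | F x} -> Y) (f : Y -> X) : Prop :=
  (forall u v, f u = f v -> u = v) /\
  (forall a, f (e a) = proj1_sig a) /\
  (forall u v, arr u v <-> arr (f u) (f v)).

Definition image {Y X : Type} (f : Y -> X) : X -> Prop :=
  fun x => exists y, f y = x.

(** rk_X(F) >= n, for finite levels n. *)
Fixpoint rk_ge (X : tournament) (n : nat) (F : X -> Prop) : Prop :=
  match n with
  | O => True
  | S m => forall (Y : tournament) (e : {x : X | F x} -> Y),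
      prime_ext F Y e ->
      exists f : Y -> X, @realization X F Y e f /\ rk_ge X m (image f)
  end.

Definition rk_eq (X : tournament) (F : X -> Prop) (n : nat) : Prop :=
  rk_ge X n F /\ ~ rk_ge X (S n) F.

(* In A + B every vertex of B is beaten only by vertices of B, and every
   vertex of A beats only vertices of A, so there is no vertex v with
   z -> v -> a for z in B and a in A.  But extending F u {z} by a new vertex
   beaten by z alone is a prime extension, and realizing it in A + B would
   produce exactly such a v; hence rank at least 1 fails. *)

From Stdlib Require Import List Classical ProofIrrelevance.

Lemma list_sig_cover {X : Type} (G : X -> Prop) (l : list X) :
  exists L : list {x : X | G x}, forall s, In (proj1_sig s) l -> In s L.
Proof.
  induction l as [|x l [L HL]].
  - exists nil; simpl; tauto.
  - destruct (classic (G x)) as [Gx|nGx].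
    + exists (exist _ x Gx :: L); intros [y Gy]; simpl; intros [<-|Hy].
      * left; apply subset_eq_compat; reflexivity.
      * right; exact (HL (exist _ y Gy) Hy).
    + exists L; intros [y Gy]; simpl; intros [<-|Hy].
      * contradiction.
      * exact (HL (exist _ y Gy) Hy).
Qed.

Lemma finite_type_sig {X : Type} (G : X -> Prop) :
  finite_set G -> finite_type {x : X | G x}.
Proof.
  intros [l Hl]; destruct (list_sig_cover G l) as [L HL].
  exists L; intros s; apply HL, Hl, proj2_sig.
Qed.

Section PointExtension.
Context {X : tournament} {G : X -> Prop} (P : {x : X | G x} -> Prop).

(* [None] is the new vertex; it is beaten exactly by the [a] with [P a]. *)
Definition point_ext_arr (u v : option {x : X | G x}) : Prop :=
  match u, v with
  | Some a, Some b => arr (proj1_sig a) (proj1_sig b)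
  | Some a, None => P a
  | None, Some b => ~ P b
  | None, None => False
  end.

Lemma point_ext_arr_asym u v : point_ext_arr u v -> ~ point_ext_arr v u.
Proof. destruct u, v; simpl; auto using arr_asym. Qed.

Lemma point_ext_arr_tot u v : u <> v -> point_ext_arr u v \/ point_ext_arr v u.
Proof.
  destruct u as [a|], v as [b|]; simpl; intros Huv.
  - apply arr_tot; intros Eab; apply Huv, f_equal.
    apply eq_sig_hprop; auto using proof_irrelevance.
  - apply classic.
  - apply or_comm, classic.
  - congruence.
Qed.

Definition point_ext : tournament :=
  @Tournament _ point_ext_arr point_ext_arr_asym point_ext_arr_tot.

Lemma point_ext_prime : finite_set G -> prime_ext G point_ext Some.
Proof.
  intros HG; split; [|split; [|split]].
  - destruct (finite_type_sig G HG) as [L HL].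
    exists (None :: map Some L); intros [s|]; simpl; auto using in_map.
  - congruence.
  - reflexivity.
  - exists None; split; [congruence|].
    intros [y|] Hy; [exists y; reflexivity|congruence].
Qed.

Lemma rk_ge1_realizes_point_ext :
  finite_set G -> rk_ge X 1 G ->
  exists v : X, forall a,
    (arr (proj1_sig a) v <-> P a) /\ (arr v (proj1_sig a) <-> ~ P a).
Proof.
  intros HG Hrk.
  destruct (Hrk point_ext Some (point_ext_prime HG))
    as [f [[_ [f_fix f_arr]] _]].
  exists (f None); intros a; rewrite <- (f_fix a).
  split; symmetry; [exact (f_arr (Some a) None) | exact (f_arr None (Some a))].
Qed.

End PointExtension.

Lemma tsum_no_path_inr_inl {A B : tournament} {v : tsum A B} (z : B) (a : A) :
  arr (inr z : tsum A B) v -> ~ arr v (inl a : tsum A B).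
Proof. destruct v; simpl; auto. Qed.

Theorem lemma5p4 (A B : tournament) (F : tsum A B -> Prop) :
  finite_set F ->
  (exists a : A, F (inl a)) ->
  forall z : B, ~ F (inr z) ->
  rk_eq (tsum A B) (fun x => F x \/ x = inr z) 0.
Proof.
  (* [z] need not lie outside [F]. *)
  intros [l Hl] [a Fa] z _; split; [exact I|]; intros Hrk.
  set (G := fun x : tsum A B => F x \/ x = inr z).
  assert (HG : finite_set G).
  { exists (inr z :: l); intros x [Fx| ->]; simpl; auto. }
  destruct (rk_ge1_realizes_point_ext (fun s : {x | G x} => proj1_sig s = inr z)
              HG Hrk) as [v Hv].
  apply (tsum_no_path_inr_inl (v := v) z a).
  - apply (Hv (exist G (inr z) (or_intror eq_refl))); reflexivity.
  - apply (Hv (exist G (inl a) (or_introl Fa))); discriminate.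
Qed.
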